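(* Let $V=\bigoplus_{n\in\mathbb{Z}}V_n$ be an $\mathcal{H}$-module vertex algebra such that $V_n=0$ for $n<0$ and $V_0=\mathbb{F}\mathbf{1}$, and let $J$ be the sum of all proper graded $V$-submodules of $V$ (the maximal proper graded $V$-submodule of $V$). Then $J$ is an ideal of $V$. If in addition $L_1^{(n)}V_n=0$ for all $n\ge1$, then $J$ is also an $\mathcal{H}$-submodule of $V$.
   Context: Throughout, $\mathbb{F}$ is an algebraically closed field of odd prime characteristic $p$; vertex algebras are over $\mathbb{F}$. Every vertex algebra $V$ is a module for the bialgebra $\mathcal{B}$ with basis $\{\mathcal{D}^{(n)}\}_{n\in\mathbb{N}}$, $\mathcal{D}^{(m)}\mathcal{D}^{(n)}=\binom{m+n}{n}\mathcal{D}^{(m+n)}$, via $\mathcal{D}^{(n)}v=v_{-n-1}\mathbf{1}$. $\mathcal{H}$: let $\mathfrak{sl}_2$ over $\mathbb{C}$ have basis $L_{-1},L_0,L_1$ with $[L_1,L_{-1}]=2L_0$, $[L_0,L_{\pm1}]=\mp L_{\pm1}$; put $L_{\pm1}^{(n)}=L_{\pm1}^n/n!$, $L_0^{(n)}=\binom{-2L_0}{n}$ in $U(\mathfrak{sl}_2)$; $U(\mathfrak{sl}_2)_{\mathbb{Z}}$ is the $\mathbb{Z}$-span of the $L_{-1}^{(i)}L_0^{(j)}L_1^{(k)}$, and $\mathcal{H}=\mathbb{F}\otimes_{\mathbb{Z}}U(\mathfrak{sl}_2)_{\mathbb{Z}}$. $e^{zL_{\pm1}}=\sum_{n\ge0}z^nL_{\pm1}^{(n)}$.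 For $v$ homogeneous of degree $n$, $f(z)^{\deg}v:=f(z)^nv$, extended linearly. A $\mathbb{Z}$-graded vertex algebra: $V=\bigoplus V_n$, $\mathbf{1}\in V_0$, $u_rV_n\subset V_{m+n-r-1}$ for $u\in V_m$; a graded $V$-submodule of $V$ is a subspace $U=\bigoplus(U\cap V_n)$ with $u_rU\subset U$ for all $u\in V$. A $\mathbb{Z}$-graded weight $\mathcal{H}$-module: $W=\bigoplus W_n$ with $\mathcal{H}$-action, $L_{\pm1}^{(r)}W_n\subset W_{n\mp r}$, $L_0^{(r)}|_{W_n}=\binom{-2n}{r}$. An $\mathcal{H}$-module vertex algebra: a $\mathbb{Z}$-graded vertex algebra $V$ which is a $\mathbb{Z}$-graded weight $\mathcal{H}$-module with $L_{-1}^{(n)}=\mathcal{D}^{(n)}$, such that $V_n=0$ for $n\ll0$, $L_1^{(n)}\mathbf{1}=\delta_{n,0}\mathbf{1}$, and $e^{zL_1}Y(v,z_0)e^{-zL_1}=Y\bigl(e^{z(1-zz_0)L_1}(1-zz_0)^{-2\deg}v,z_0/(1-zz_0)\bigr)$ for $v\in V$. *)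

From HB Require Import structures.
From mathcomp Require Import all_boot all_order all_algebra.
Set Implicit Arguments. Unset Strict Implicit. Unset Printing Implicit Defensive.
Import Order.TTheory GRing.Theory Num.Theory.
Local Open Scope ring_scope.

(* Generalized binomial coefficient binom(x, k) = x(x-1)...(x-k+1)/k! for x : int. *)
Definition binz (x : int) (k : nat) : int :=
  match x with
  | Posz n => ('C(n, k))%:Z
  | Negz n => (-1) ^+ k * ('C(n + k, k))%:Z   (* Negz n = -(n+1) *)
  end.

Definition lin_map (F : fieldType) (V : lmodType F) (f : V -> V) : Prop :=
  forall (a : F) (x y : V), f (a *: x + y) = a *: f x + f y.

Definition subspace (F : fieldType) (V : lmodType F) (U : V -> Prop) : Prop :=
  U 0 /\ forall (a : F) (x y : V), U x -> U y -> U (a *: x + y).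

(* A Z-grading V = (+)_n V_n, given by the family of projections pi n onto V_n;
   V_n = { v | pi n v = v }. *)
Definition is_grading (F : fieldType) (V : lmodType F) (pi : int -> V -> V) : Prop :=
  (forall n, lin_map (pi n)) /\
  (forall (n m : int) (x : V), pi n (pi m x) = if n == m then pi m x else 0) /\
  (forall x : V, exists s : seq int,
      uniq s /\ (forall n, n \notin s -> pi n x = 0) /\ x = \sum_(n <- s) pi n x).

(* Vertex algebra over F: Y u r v = u_r v. Borcherds identity with the (finite)
   sums truncated at any K beyond which all summands vanish. *)
Record vertex_algebra (F : fieldType) (V : lmodType F) (one : V)
    (Y : V -> int -> V -> V) : Prop := {
  va_lin_l : forall r v, lin_map (fun u => Y u r v);
  va_lin_r : forall u r, lin_map (Y u r);
  va_trunc : forall u v, exists N : int, forall r, N <= r -> Y u r v = 0;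
  va_vac_l : forall r v, Y one r v = if r == -1 then v else 0;
  va_create : forall u, Y u (-1) one = u;
  va_vac_r : forall u r, 0 <= r -> Y u r one = 0;
  va_borcherds : forall (u v w : V) (m n l : int) (K : nat),
    (forall i : nat, (K <= i)%N ->
       Y u (l + i%:Z) v = 0 /\ Y v (n + i%:Z) w = 0 /\ Y u (m + i%:Z) w = 0) ->
    \sum_(0 <= i < K) ((binz m i)%:~R : F) *: Y (Y u (l + i%:Z) v) (m + n - i%:Z) w =
    \sum_(0 <= i < K) ((-1) ^+ i * (binz l i)%:~R : F) *:
       (Y u (m + l - i%:Z) (Y v (n + i%:Z) w)
        - ((-1) ^+ `|l|%N : F) *: Y v (n + l - i%:Z) (Y u (m + i%:Z) w))
}.

Definition graded_VA (F : fieldType) (V : lmodType F) (one : V)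
    (Y : V -> int -> V -> V) (pi : int -> V -> V) : Prop :=
  vertex_algebra one Y /\ is_grading pi /\ pi 0 one = one /\
  forall (u v : V) (m n r : int), pi m u = u -> pi n v = v ->
    pi (m + n - r - 1) (Y u r v) = Y u r v.

(* Z-graded weight H-module structure on (V, pi): Lm1 k, L0 k, L1 k are the
   actions of L_{-1}^{(k)}, L_0^{(k)}, L_1^{(k)}, subject to the relations of
   H = F (x) U(sl_2)_Z on weight modules (with e = L_1, f = -L_{-1}, h = -2L_0). *)
Definition weight_H_module (F : fieldType) (V : lmodType F) (pi : int -> V -> V)
    (Lm1 L0 L1 : nat -> V -> V) : Prop :=
  (forall k, lin_map (Lm1 k) /\ lin_map (L0 k) /\ lin_map (L1 k)) /\
  (forall v, Lm1 0%N v = v /\ L1 0%N v = v) /\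
  (forall (a b : nat) v, Lm1 a (Lm1 b v) = ('C(a + b, a))%:R *: Lm1 (a + b)%N v) /\
  (forall (a b : nat) v, L1 a (L1 b v) = ('C(a + b, a))%:R *: L1 (a + b)%N v) /\
  (forall (n : int) (k : nat) v, pi n v = v ->
     pi (n + k%:Z) (Lm1 k v) = Lm1 k v /\ pi (n - k%:Z) (L1 k v) = L1 k v) /\
  (forall (n : int) (k : nat) v, pi n v = v -> L0 k v = (binz (-2 * n) k)%:~R *: v) /\
  (forall (n : int) (a b : nat) v, pi n v = v ->
     L1 a (Lm1 b v) =
     \sum_(0 <= t < (minn a b).+1)
        ((-1) ^+ t * (binz (-2 * n + a%:Z - b%:Z) t)%:~R : F) *: Lm1 (b - t)%N (L1 (a - t)%N v)).

(* The conjugation formula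
   e^{zL_1} Y(v,z0) e^{-zL_1} = Y(e^{z(1-z z0)L_1}(1-z z0)^{-2 deg} v, z0/(1-z z0))
   is stated coefficientwise (coefficient of z^k z0^{-r-1}) for homogeneous v of degree d. *)
Definition H_module_VA (F : fieldType) (V : lmodType F) (one : V)
    (Y : V -> int -> V -> V) (pi : int -> V -> V) (Lm1 L0 L1 : nat -> V -> V) : Prop :=
  graded_VA one Y pi /\ weight_H_module pi Lm1 L0 L1 /\
  (forall (k : nat) v, Lm1 k v = Y v (- k%:Z - 1) one) /\
  (exists N : int, forall n v, n < N -> pi n v = 0) /\
  (forall k : nat, L1 k one = if k == 0%N then one else 0) /\
  (forall (d r : int) (k : nat) (v w : V), pi d v = v ->
     \sum_(0 <= a < k.+1) ((-1) ^+ (k - a) : F) *: L1 a (Y v r (L1 (k - a)%N w)) =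
     \sum_(0 <= i < k.+1) ((-1) ^+ i * (binz (k%:Z - 2 * d + r + 1) i)%:~R : F) *:
        Y (L1 (k - i)%N v) (r + i%:Z) w).

Definition proper_graded_submodule (F : fieldType) (V : lmodType F)
    (Y : V -> int -> V -> V) (pi : int -> V -> V) (U : V -> Prop) : Prop :=
  subspace U /\ (forall n x, U x -> U (pi n x)) /\
  (forall u r x, U x -> U (Y u r x)) /\ (exists v, ~ U v).

Definition max_graded_submodule (F : fieldType) (V : lmodType F)
    (Y : V -> int -> V -> V) (pi : int -> V -> V) (v : V) : Prop :=
  exists (k : nat) (us : 'I_k -> V) (Us : 'I_k -> V -> Prop),
    (forall i, proper_graded_submodule Y pi (Us i) /\ Us i (us i)) /\
    v = \sum_(i < k) us i.

Definition VA_ideal (F : fieldType) (V : lmodType F) (Y : V -> int -> V -> V)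
    (I : V -> Prop) : Prop :=
  subspace I /\ forall u a r, I a -> I (Y u r a) /\ I (Y a r u).

Definition H_submodule (F : fieldType) (V : lmodType F) (Lm1 L0 L1 : nat -> V -> V)
    (I : V -> Prop) : Prop :=
  subspace I /\ forall (k : nat) a, I a -> I (Lm1 k a) /\ I (L0 k a) /\ I (L1 k a).

From HB Require Import structures.
From mathcomp Require Import all_boot all_order all_algebra zify.
Import Order.TTheory GRing.Theory Num.Theory.
Local Open Scope ring_scope.
Set Implicit Arguments. Unset Strict Implicit. Unset Printing Implicit Defensive.

(** A graded submodule of V is proper iff it meets V_0 = F1 trivially, since 1 generates V;
    call such submodules positive. They are closed under sums, so J is their union.
    If U is positive, so is the span of all products b_s w with b in U: it is stable under
    left multiplication by the commutator formula, and a product b_s w of degree 0 vanishes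
    by skew symmetry, because every w_{s+i} b lies in U in degree -i <= 0. Hence J is a
    two-sided ideal, and it is stable under L_{-1}^{(k)} a = a_{-k-1} 1 and under L_0^{(k)},
    which is a scalar on each V_n. If moreover L_1^{(n)} V_n = 0 for n >= 1, the span of all
    L_1^{(j)} U is positive as well: the conjugation formula for e^{zL_1} shows, by induction
    on j, that it is stable under all vertex operators, and L_1^{(j)} y has degree 0 only for
    y in U of degree j, where it vanishes. *)

Lemma binz0 x : binz x 0 = 1.
Proof. by case: x => n; rewrite /binz ?bin0 ?expr0 ?mul1r ?addn0 ?bin0. Qed.

Lemma binz0n i : binz 0 i = (i == 0)%N%:Z.
Proof. by case: i. Qed.

Section Subspaces.
Variables (F : fieldType) (V : lmodType F).
Implicit Types (f : V -> V) (S G : V -> Prop).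

Lemma lin_map0 f : lin_map f -> f 0 = 0.
Proof.
move=> lin_f; have := lin_f 1 0 0; rewrite !scale1r addr0 => E.
by apply: (addrI (f 0)); rewrite addr0 -E.
Qed.

Lemma lin_mapD f x y : lin_map f -> f (x + y) = f x + f y.
Proof. by move=> lin_f; have := lin_f 1 x y; rewrite !scale1r. Qed.

Lemma subspace0 S : subspace S -> S 0.
Proof. by case. Qed.

Lemma subspaceD S x y : subspace S -> S x -> S y -> S (x + y).
Proof. by case=> _ subS Sx Sy; have := subS 1 x y Sx Sy; rewrite scale1r. Qed.

Lemma subspaceZ S a x : subspace S -> S x -> S (a *: x).
Proof. by case=> S0 subS Sx; have := subS a x 0 Sx S0; rewrite addr0. Qed.

Lemma subspaceB S x y : subspace S -> S x -> S y -> S (x - y).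
Proof. by move=> subS Sx Sy; rewrite -scaleN1r; apply: subspaceD => //; apply: subspaceZ. Qed.

Lemma subspace_sum S I (r : seq I) (P : pred I) (h : I -> V) : subspace S ->
  (forall i, P i -> S (h i)) -> S (\sum_(i <- r | P i) h i).
Proof. by move=> subS Sh; apply: (big_ind S (subspace0 subS)) => // x y; apply: subspaceD. Qed.

Lemma subspace_sum_nat S m n (h : nat -> V) : subspace S ->
  (forall i, (m <= i < n)%N -> S (h i)) -> S (\sum_(m <= i < n) h i).
Proof. by move=> subS Sh; rewrite big_nat_cond; apply: subspace_sum => // i /andP[/Sh]. Qed.

Lemma subspace_preim f S : lin_map f -> subspace S -> subspace (fun x => S (f x)).
Proof.
move=> lin_f [S0 subS]; split; first by rewrite lin_map0.
by move=> a x y Sx Sy; rewrite lin_f; apply: subS.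
Qed.

Lemma subspace_eq0 : subspace (fun x : V => x = 0).
Proof. by split=> // a x y -> ->; rewrite scaler0 addr0. Qed.

Lemma subspace_ext S S' : (forall x, S x <-> S' x) -> subspace S -> subspace S'.
Proof.
move=> SE [S0 subS]; split=> [|a x y /SE Sx /SE Sy]; apply/SE => //; exact: subS.
Qed.

Definition span G x := forall S, subspace S -> (forall v, G v -> S v) -> S x.

Lemma span_subspace G : subspace (span G).
Proof.
split=> [S subS _ | a x y Gx Gy S subS GS]; first exact: subspace0.
by case: (subS) => _; apply; [exact: Gx | exact: Gy].
Qed.

Lemma span_gen G v : G v -> span G v.
Proof. by move=> Gv S _; apply. Qed.

End Subspaces.

Section HModuleVertexAlgebra.
Variables (F : fieldType) (V : lmodType F) (one : V)
  (Y : V -> int -> V -> V) (pi : int -> V -> V) (Lm1 L0 L1 : nat -> V -> V).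
Hypothesis HV : H_module_VA one Y pi Lm1 L0 L1.
Implicit Types (U S : V -> Prop).

Lemma VA_axioms : vertex_algebra one Y. Proof. by case: HV => [[]]. Qed.
Lemma grading : is_grading pi. Proof. by case: HV => [[_ []]]. Qed.
Lemma pi_lin n : lin_map (pi n). Proof. by case: grading => lin_pi _; apply: lin_pi. Qed.
Lemma pi_one : pi 0 one = one. Proof. by case: HV => [[_ [_ []]]]. Qed.

Lemma pi_pi n m x : pi n (pi m x) = if n == m then pi m x else 0.
Proof. by case: grading => _ [pi_pi _]; apply: pi_pi. Qed.

Lemma pi_id n x : pi n (pi n x) = pi n x.
Proof. by rewrite pi_pi eqxx. Qed.

Lemma pi_homog k n x : pi k x = x -> pi n x = if n == k then x else 0.
Proof. by move=> <-; rewrite pi_pi. Qed.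

Lemma homog_ind S x : subspace S -> (forall n, S (pi n x)) -> S x.
Proof. by move=> subS Sx; case: grading => _ [_ /(_ x) [s [_ [_ ->]]]]; apply: subspace_sum. Qed.

Lemma Y_lin_l r v : lin_map (fun u => Y u r v). Proof. exact: (va_lin_l VA_axioms). Qed.
Lemma Y_lin_r u r : lin_map (Y u r). Proof. exact: (va_lin_r VA_axioms). Qed.

Lemma Y_homog u v m n r : pi m u = u -> pi n v = v ->
  pi (m + n - r - 1) (Y u r v) = Y u r v.
Proof. by case: HV => [[_ [_ [_ Y_homog]]] _]; apply: Y_homog. Qed.

Lemma Y_homog_ind S b s w : subspace S ->
  (forall m m', S (Y (pi m b) s (pi m' w))) -> S (Y b s w).
Proof.
move=> subS Sbw; apply: (homog_ind (x := b) (subspace_preim (Y_lin_l s w) subS)) => m.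
exact: (homog_ind (x := w) (subspace_preim (Y_lin_r _ s) subS)).
Qed.

Lemma Y_trunc u v (r0 : int) :
  exists K : nat, forall i : nat, (K <= i)%N -> Y u (r0 + i%:Z) v = 0.
Proof. by case: (va_trunc VA_axioms u v) => N YN; exists `|N - r0|%N => i Ki; apply: YN; lia. Qed.

Lemma weight_module : weight_H_module pi Lm1 L0 L1. Proof. by case: HV => _ []. Qed.
Lemma L1_lin k : lin_map (L1 k).
Proof. by case: weight_module => lin_L _; case: (lin_L k) => _ []. Qed.

Lemma L0_lin k : lin_map (L0 k).
Proof. by case: weight_module => lin_L _; case: (lin_L k) => _ []. Qed.

Lemma L1_0 v : L1 0 v = v. Proof. by case: weight_module => _ [L_0 _]; case: (L_0 v). Qed.

Lemma L1_L1 a b v : L1 a (L1 b v) = ('C(a + b, a))%:R *: L1 (a + b)%N v.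
Proof. by case: weight_module => _ [_ [_ []]]. Qed.

Lemma L1_homog n k v : pi n v = v -> pi (n - k%:Z) (L1 k v) = L1 k v.
Proof. by case: weight_module => _ [_ [_ [_ [L_homog _]]]] /(L_homog _ k)[]. Qed.

Lemma L0_homog n k v : pi n v = v -> L0 k v = (binz (-2 * n) k)%:~R *: v.
Proof. by case: weight_module => _ [_ [_ [_ [_ [L0_homog _]]]]]; apply: L0_homog. Qed.

Lemma Lm1E k v : Lm1 k v = Y v (- k%:Z - 1) one.
Proof. by case: HV => _ [_ []]. Qed.

Lemma L1_conjugation (d r : int) (k : nat) (v w : V) : pi d v = v ->
  \sum_(0 <= a < k.+1) ((-1) ^+ (k - a) : F) *: L1 a (Y v r (L1 (k - a)%N w)) =
  \sum_(0 <= i < k.+1) ((-1) ^+ i * (binz (k%:Z - 2 * d + r + 1) i)%:~R : F) *: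
     Y (L1 (k - i)%N v) (r + i%:Z) w.
Proof. by case: HV => _ [_ [_ [_ [_ conj]]]]; apply: conj. Qed.

Lemma commutator_formula c b w (t s : int) : exists K : nat,
  Y c t (Y b s w) =
  \sum_(0 <= i < K) ((binz t i)%:~R : F) *: Y (Y c i%:Z b) (t + s - i%:Z) w + Y b s (Y c t w).
Proof.
have [K1 YK1] := Y_trunc c b 0; have [K2 YK2] := Y_trunc b w s; have [K3 YK3] := Y_trunc c w t.
set K := maxn 1 (maxn K1 (maxn K2 K3)); exists K.
have trunc (i : nat) : (K <= i)%N ->
    Y c (0 + i%:Z) b = 0 /\ Y b (s + i%:Z) w = 0 /\ Y c (t + i%:Z) w = 0.
  by rewrite /K => Ki; split; [apply: YK1 | split; [apply: YK2 | apply: YK3]]; lia.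
have E := va_borcherds VA_axioms trunc.
rewrite [RHS]big_ltn in E; last by rewrite /K; lia.
rewrite [X in _ = _ + X]big_nat_cond [X in _ = _ + X]big1 ?addr0 in E; last first.
  move=> i /andP[/andP[i_gt0 _] _].
  by rewrite binz0n; case: i i_gt0 => // i _; rewrite mulr0 scale0r.
rewrite binz0n expr0 mul1r !scale1r in E.
by rewrite -[LHS](subrK (Y b s (Y c t w))) -E.
Qed.

Lemma Y_skew_eq0 b w (s : int) : (forall i : nat, Y w (s + i%:Z) b = 0) -> Y b s w = 0.
Proof.
move=> w_b0.
have trunc (i : nat) : (1 <= i)%N ->
    Y w (s + i%:Z) b = 0 /\ Y b (0 + i%:Z) one = 0 /\ Y w (-1 + i%:Z) one = 0.
  by move=> i_gt0; split; [exact: w_b0 | split; apply: (va_vac_r VA_axioms); lia].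
move: (va_borcherds VA_axioms trunc).
rewrite !big_nat1 !binz0 w_b0 (lin_map0 (Y_lin_l _ _)) scaler0 (va_vac_r VA_axioms) //.
rewrite (lin_map0 (Y_lin_r _ _)) !addr0 !add0r ?subr0 (va_create VA_axioms).
rewrite expr0 mul1r scale1r => /esym /eqP; rewrite oppr_eq0 scaler_eq0 => /orP [|/eqP //].
by rewrite expf_eq0 oppr_eq0 oner_eq0 andbF.
Qed.

Hypothesis V_neg : forall (n : int) (v : V), n < 0 -> pi n v = 0.
Hypothesis V_deg0 : forall v : V, pi 0 v = v -> exists c : F, v = c *: one.

(* As V_n = 0 for n < 0, these submodules lie in the positive part of V. *)
Record positive_submodule U : Prop := {
  pos_subspace : subspace U;
  pos_pi : forall n x, U x -> U (pi n x);
  pos_Y : forall u r x, U x -> U (Y u r x);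
  pos_deg0 : forall x, U x -> pi 0 x = 0 }.

Lemma proper_positive U : proper_graded_submodule Y pi U -> positive_submodule U.
Proof.
case=> subU [piU [YU [v Uv]]]; split=> // x Ux.
have [c Ec] := V_deg0 (pi_id 0 x).
have [c0|c_neq0] := eqVneq c 0; first by rewrite Ec c0 scale0r.
case: Uv; rewrite -(va_create VA_axioms v); apply: YU.
have -> : one = c^-1 *: pi 0 x by rewrite Ec scalerA mulVf // scale1r.
by apply: subspaceZ subU (piU 0 x Ux).
Qed.

Lemma positive_proper U : one != 0 -> positive_submodule U -> proper_graded_submodule Y pi U.
Proof.
move=> one_neq0 [subU piU YU U_deg0]; split=> //; split=> //; split=> //.
by exists one => /U_deg0; rewrite pi_one; apply/eqP.
Qed.

Lemma positive_submodule0 : positive_submodule (fun x => x = 0).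
Proof.
split=> [|n x ->|u r x ->|x ->]; first exact: subspace_eq0.
- exact: lin_map0 (pi_lin n).
- exact: lin_map0 (Y_lin_r u r).
- exact: lin_map0 (pi_lin 0).
Qed.

Lemma positive_submoduleD U1 U2 : positive_submodule U1 -> positive_submodule U2 ->
  positive_submodule (fun x => exists y z, U1 y /\ U2 z /\ x = y + z).
Proof.
move=> [sub1 pi1 Y1 deg1] [sub2 pi2 Y2 deg2]; split.
- split=> [|a x y [x1 [x2 [U1x1 [U2x2 ->]]]] [y1 [y2 [U1y1 [U2y2 ->]]]]].
    by exists 0, 0; rewrite addr0; split; [exact: subspace0 | split; [exact: subspace0 |]].
  exists (a *: x1 + y1), (a *: x2 + y2); rewrite scalerDr addrACA.
  by split; [case: sub1 => _; apply | split; [case: sub2 => _; apply |]].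
- move=> n x [y [z [U1y [U2z ->]]]]; exists (pi n y), (pi n z).
  by rewrite (lin_mapD _ _ (pi_lin n)); split; [exact: pi1 | split; [exact: pi2 |]].
- move=> u r x [y [z [U1y [U2z ->]]]]; exists (Y u r y), (Y u r z).
  by rewrite (lin_mapD _ _ (Y_lin_r u r)); split; [exact: Y1 | split; [exact: Y2 |]].
- by move=> x [y [z [U1y [U2z ->]]]]; rewrite (lin_mapD _ _ (pi_lin 0)) deg1 // deg2 // addr0.
Qed.

Definition J x := exists U, positive_submodule U /\ U x.

Lemma J_subspace : subspace J.
Proof.
split=> [|a x y [U1 [posU1 U1x]] [U2 [posU2 U2y]]].
  by exists (fun x => x = 0); split=> //; exact: positive_submodule0.
exists (fun x => exists y z, U1 y /\ U2 z /\ x = y + z); split; first exact: positive_submoduleD.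
by exists (a *: x), y; split=> //; exact: subspaceZ (pos_subspace posU1) U1x.
Qed.

Lemma one_eq0_trivial (v : V) : one = 0 -> v = 0.
Proof. by move=> one0; rewrite -(va_create VA_axioms v) one0 (lin_map0 (Y_lin_r _ _)). Qed.

Lemma max_graded_submoduleE x : max_graded_submodule Y pi x <-> J x.
Proof.
split=> [[k] | [U [posU Ux]]].
  elim: k x => [|k IHk] x [us [Us [Us_proper ->]]].
    by rewrite big_ord0; exists (fun x => x = 0); split=> //; exact: positive_submodule0.
  have [U' [posU' U'x]] : J (\sum_(i < k) us (lift ord0 i)).
    by apply: IHk; exists (fun i => us (lift ord0 i)), (fun i => Us (lift ord0 i)).
  have [/proper_positive posU0 U0x] := Us_proper ord0.
  exists (fun x => exists y z, Us ord0 y /\ U' z /\ x = y + z).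
  split; first exact: positive_submoduleD.
  by rewrite big_ord_recl; exists (us ord0), (\sum_(i < k) us (lift ord0 i)).
have [one0|one_neq0] := eqVneq one 0.
  rewrite (one_eq0_trivial x one0); exists 0%N, (fun _ => 0), (fun _ _ => True).
  by split; [case | rewrite big_ord0].
exists 1%N, (fun _ => x), (fun _ => U); split; last by rewrite big_ord1.
by move=> _; split=> //; exact: positive_proper.
Qed.

Lemma positive_product_deg0 U b w (m m' s : int) : positive_submodule U -> U b ->
  pi m b = b -> pi m' w = w -> m + m' - s - 1 = 0 -> Y b s w = 0.
Proof.
move=> posU Ub b_m w_m' deg0; apply: Y_skew_eq0 => i.
have := Y_homog (s + i%:Z) w_m' b_m.
have -> : m' + m - (s + i%:Z) - 1 = - i%:Z by lia.
case: i => [|i] <-; first exact/(pos_deg0 posU)/(pos_Y posU).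
by rewrite V_neg //; lia.
Qed.

Definition product_span U := span (fun x => exists b s w, U b /\ x = Y b s w).

Lemma product_span_gen U b s w : U b -> product_span U (Y b s w).
Proof. by move=> Ub; apply: span_gen; exists b, s, w. Qed.

Lemma product_span_pi U n x : (forall m b, U b -> U (pi m b)) ->
  product_span U x -> product_span U (pi n x).
Proof.
move=> piU spx; have sub_pi : subspace (fun x => product_span U (pi n x)).
  exact: subspace_preim (pi_lin n) (span_subspace _).
apply: (spx _ sub_pi) => _ [b [s [w [Ub ->]]]]; apply: Y_homog_ind sub_pi _ => m m'.
rewrite (pi_homog n (Y_homog s (pi_id m b) (pi_id m' w))).
by case: ifP => _; [apply: product_span_gen; apply: piU | exact: subspace0 (span_subspace _)].
Qed.

Lemma product_span_Y U c t x : (forall u r b, U b -> U (Y u r b)) ->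
  product_span U x -> product_span U (Y c t x).
Proof.
move=> YU spx; apply: (spx (fun x => product_span U (Y c t x))).
  exact: subspace_preim (Y_lin_r c t) (span_subspace _).
move=> _ [b [s [w [Ub ->]]]]; have [K ->] := commutator_formula c b w t s.
apply: subspaceD (span_subspace _) _ (product_span_gen _ _ Ub).
apply: subspace_sum_nat (span_subspace _) _ => i _.
by apply: subspaceZ (span_subspace _) (product_span_gen _ _ (YU _ _ _ Ub)).
Qed.

Lemma product_span_deg0 U x : positive_submodule U -> product_span U x -> pi 0 x = 0.
Proof.
move=> posU spx; have sub_pi0 : subspace (fun x => pi 0 x = 0).
  exact: (subspace_preim (pi_lin 0) (@subspace_eq0 F V)).
apply: (spx _ sub_pi0) => _ [b [s [w [Ub ->]]]]; apply: Y_homog_ind sub_pi0 _ => m m'.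
rewrite (pi_homog 0 (Y_homog s (pi_id m b) (pi_id m' w))); case: eqP => // deg0.
by apply: positive_product_deg0 posU (pos_pi posU m Ub) (pi_id m b) (pi_id m' w) _; lia.
Qed.

Lemma product_span_positive U : positive_submodule U -> positive_submodule (product_span U).
Proof.
move=> posU; split=> [|n x|u r x|x]; first exact: span_subspace.
- exact: product_span_pi (pos_pi posU).
- exact: product_span_Y (pos_Y posU).
- exact: product_span_deg0.
Qed.

Lemma J_Y u r a : J a -> J (Y u r a).
Proof. by case=> U [posU Ua]; exists U; split=> //; apply: pos_Y. Qed.

Lemma J_Yl a r u : J a -> J (Y a r u).
Proof.
case=> U [posU Ua]; exists (product_span U).
by split; [exact: product_span_positive | exact: product_span_gen].
Qed.

Lemma J_Lm1 k a : J a -> J (Lm1 k a).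
Proof. by rewrite Lm1E; apply: J_Yl. Qed.

Lemma J_L0 k a : J a -> J (L0 k a).
Proof.
case=> U [posU Ua]; exists U; split=> //.
apply: (homog_ind (x := a) (subspace_preim (L0_lin k) (pos_subspace posU))) => n.
by rewrite (L0_homog k (pi_id n a)); apply: subspaceZ (pos_subspace posU) (pos_pi posU n Ua).
Qed.

Definition L1_span U := span (fun x => exists j y, U y /\ x = L1 j y).

Lemma L1_span_gen U j y : U y -> L1_span U (L1 j y).
Proof. by move=> Uy; apply: span_gen; exists j, y. Qed.

Lemma L1_span_self U y : U y -> L1_span U y.
Proof. by rewrite -{2}(L1_0 y); apply: L1_span_gen. Qed.

Lemma L1_span_L1 U a x : L1_span U x -> L1_span U (L1 a x).
Proof.
move=> spx; apply: (spx (fun x => L1_span U (L1 a x))).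
  exact: subspace_preim (L1_lin a) (span_subspace _).
by move=> _ [j [y [Uy ->]]]; rewrite L1_L1; apply: subspaceZ (span_subspace _) (L1_span_gen _ Uy).
Qed.

Lemma L1_span_Y_L1 U k y v r : (forall u r x, U x -> U (Y u r x)) -> U y ->
  L1_span U (Y v r (L1 k y)).
Proof.
move=> YU Uy; elim/ltn_ind: k v r => k IHk v r.
apply: (homog_ind (x := v) (subspace_preim (Y_lin_l r _) (span_subspace _))) => d.
(* The conjugation formula expresses v_r L_1^{(k)} y through the products
   (L_1^{(k-i)} v)_{r+i} y and the terms L_1^{(a)} (v_r L_1^{(k-a)} y) with a >= 1. *)
have := L1_conjugation r k y (pi_id d v); rewrite big_ltn // subn0 L1_0.
set top := Y (pi d v) r (L1 k y); set lower := \sum_(1 <= a < k.+1) _.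
set products := \sum_(0 <= i < k.+1) _ => E.
have -> : top = (-1) ^+ k *: (products - lower).
  by rewrite -E addrK scalerA -exprMn mulrNN mulr1 expr1n scale1r.
apply: subspaceZ (span_subspace _) _; apply: subspaceB (span_subspace _) _ _.
  apply: subspace_sum_nat (span_subspace _) _ => i _.
  exact: subspaceZ (span_subspace _) (L1_span_self (YU _ _ _ Uy)).
apply: subspace_sum_nat (span_subspace _) _ => a /andP[a_gt0 a_le_k].
by apply: subspaceZ (span_subspace _) (L1_span_L1 _ (IHk _ _ _ _)); lia.
Qed.

Lemma L1_span_Y U u r x : (forall u r x, U x -> U (Y u r x)) ->
  L1_span U x -> L1_span U (Y u r x).
Proof.
move=> YU spx; apply: (spx (fun x => L1_span U (Y u r x))).
  exact: subspace_preim (Y_lin_r u r) (span_subspace _).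
by move=> _ [j [y [Uy ->]]]; apply: L1_span_Y_L1.
Qed.

Lemma L1_span_pi U n x : (forall m y, U y -> U (pi m y)) ->
  L1_span U x -> L1_span U (pi n x).
Proof.
move=> piU spx; have sub_pi : subspace (fun x => L1_span U (pi n x)).
  exact: subspace_preim (pi_lin n) (span_subspace _).
apply: (spx _ sub_pi) => _ [j [y [Uy ->]]].
apply: (homog_ind (x := y) (subspace_preim (L1_lin j) sub_pi)) => m.
rewrite (pi_homog n (L1_homog j (pi_id m y))).
by case: ifP => _; [apply: L1_span_gen; apply: piU | exact: subspace0 (span_subspace _)].
Qed.

Hypothesis L1_top : forall (n : nat) (v : V), (0 < n)%N -> pi n%:Z v = v -> L1 n v = 0.

Lemma L1_span_deg0 U x : positive_submodule U -> L1_span U x -> pi 0 x = 0.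
Proof.
move=> posU spx; have sub_pi0 : subspace (fun x => pi 0 x = 0).
  exact: (subspace_preim (pi_lin 0) (@subspace_eq0 F V)).
apply: (spx _ sub_pi0) => _ [j [y [Uy ->]]].
apply: (homog_ind (x := y) (subspace_preim (L1_lin j) sub_pi0)) => m.
rewrite (pi_homog 0 (L1_homog j (pi_id m y))); case: eqP => // deg0.
case: j deg0 => [|j] deg0.
  have -> : m = 0 by lia.
  by rewrite L1_0 (pos_deg0 posU Uy).
have -> : m = j.+1 by lia.
exact: L1_top (pi_id _ y).
Qed.

Lemma L1_span_positive U : positive_submodule U -> positive_submodule (L1_span U).
Proof.
move=> posU; split=> [|n x|u r x|x]; first exact: span_subspace.
- exact: L1_span_pi (pos_pi posU).
- exact: L1_span_Y (pos_Y posU).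
- exact: L1_span_deg0.
Qed.

Lemma J_L1 k a : J a -> J (L1 k a).
Proof.
case=> U [posU Ua]; exists (L1_span U).
by split; [exact: L1_span_positive | exact: L1_span_gen].
Qed.

End HModuleVertexAlgebra.

Theorem lemma4p12 (p : nat) (F : closedFieldType) (V : lmodType F) (one : V)
    (Y : V -> int -> V -> V) (pi : int -> V -> V) (Lm1 L0 L1 : nat -> V -> V) :
  prime p -> odd p -> p \in [pchar F] ->
  H_module_VA one Y pi Lm1 L0 L1 ->
  (forall (n : int) (v : V), n < 0 -> pi n v = 0) ->
  (forall v : V, pi 0 v = v -> exists c : F, v = c *: one) ->
  VA_ideal Y (max_graded_submodule Y pi) /\
  ((forall (n : nat) (v : V), (0 < n)%N -> pi n%:Z v = v -> L1 n v = 0) ->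
   H_submodule Lm1 L0 L1 (max_graded_submodule Y pi)).
Proof.
(* The argument does not use the characteristic. *)
move=> _ _ _ HV V_neg V_deg0.
have JE := max_graded_submoduleE HV V_deg0.
have subJ : subspace (max_graded_submodule Y pi).
  by apply: subspace_ext _ (J_subspace HV) => x; apply: iff_sym.
split.
  split=> // u a r /JE Ja; split; apply/JE; first exact: J_Y.
  exact: (J_Yl HV V_neg r u Ja).
move=> L1_top; split=> // k a /JE Ja; split; [|split]; apply/JE.
- exact: (J_Lm1 HV V_neg k Ja).
- exact: (J_L0 HV k Ja).
- exact: (J_L1 HV L1_top k Ja).
Qed.
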